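(* Let $n\geq 2$ and let $\mathcal R(P_n)=u_1,\ldots,u_k$, so $u_1>_{\mathcal R}\cdots>_{\mathcal R}u_k$. Let $1<i<j\leq k$, and suppose $u_j$ is divisible by some variable belonging to the ideal $(u_1,\ldots,u_{i-1}):(u_i)$. Then either $u_iu_j$ is not a minimal generator of $J(P_n)^2$, or the expression $u_iu_j$ is not the maximal expression of the monomial $u_iu_j$.
   Context: Let $K$ be a field and $S=K[x_1,\ldots,x_n]$. For $m\geq 1$, $P_m$ is the path graph on vertices $x_1,\ldots,x_m$ with edges $\{x_i,x_{i+1}\}$. The cover ideal $J(P_m)$ is generated by the monomials $\prod_{x\in C}x$ with $C$ a minimal vertex cover of $P_m$. For a monomial ideal $I$, $G(I)$ is its set of minimal monomial generators and $F(I^2)=\{uv:u,v\in G(I)\}$. The rooted list $\mathcal R(P_m)$ is defined recursively: $\mathcal R(P_1)$ empty; $\mathcal R(P_2)=x_1,x_2$; $\mathcal R(P_3)=x_2,x_1x_3$; $\mathcal R(P_4)=x_1x_3,x_2x_3,x_2x_4$; for $m\geq5$, if $\mathcal R(P_{m-2})=u_1,\ldots,u_r$ and $\mathcal R(P_{m-3})=v_1,\ldots,v_s$, then $\mathcal R(P_m)=x_{m-1}u_1,\ldots,x_{m-1}u_r,x_mx_{m-2}v_1,\ldots,x_mx_{m-2}v_s$; it lists each element of $G(J(P_m))$ once, and $w_i>_{\mathcal R}w_j$ iff $w_i$ precedes $w_j$. With $\mathcal R(P_m)=u_1,\ldots,u_q$, each $M\in F(J(P_m)^2)$ can be written $u_1^{a_1}\cdots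 u_q^{a_q}$ with $a_i\geq0$, $\sum a_i=2$; the maximal expression of $M$ is the one with lexicographically largest exponent vector $(a_1,\ldots,a_q)$. ''The expression $u_iu_j$ is maximal'' means the exponent vector $e_i+e_j$ is that of the maximal expression of the monomial $u_iu_j$. *)

From mathcomp Require Import all_boot.
Set Implicit Arguments. Unset Strict Implicit. Unset Printing Implicit Defensive.

(* A monomial in the variables x_1, x_2, ... is its exponent function
   (variable index v >= 1 |-> exponent of x_v).  Monomials are compared
   pointwise. *)
Definition mon := nat -> nat.

Definition mon_eq (a b : mon) : Prop := forall v, a v = b v.
Definition mon_dvd (a b : mon) : Prop := forall v, a v <= b v.
Definition mon_mul (a b : mon) : mon := fun v => a v + b v.
Definition var (v : nat) : mon := fun w => nat_of_bool (w == v).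
Definition mon_of (s : seq nat) : mon := fun v => count_mem v s.

(* Monomial ideal membership: a monomial lies in the ideal generated by the
   monomials gens iff some generator divides it. *)
Definition in_monideal (gens : seq mon) (M : mon) : Prop :=
  exists2 l, l < size gens & mon_dvd (nth (fun _ => 0) gens l) M.
(* A monomial f lies in the colon ideal (gens) : (u) iff f*u lies in (gens). *)
Definition in_colon (gens : seq mon) (u f : mon) : Prop :=
  in_monideal gens (mon_mul f u).

(* Path graph P_m on vertices x_1..x_m with edges {x_i, x_{i+1}}. *)
Definition is_vcover_path (m : nat) (C : seq nat) : Prop :=
  {subset C <= [pred v | 1 <= v <= m]} /\
  forall i, 1 <= i -> i < m -> (i \in C) || (i.+1 \in C).
Definition is_min_vcover_path (m : nat) (C : seq nat) : Prop :=
  is_vcover_path m C /\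
  forall D : seq nat, {subset D <= C} -> is_vcover_path m D -> {subset C <= D}.

(* the generator prod_{x in C} x of J(P_m) attached to a vertex cover *)
Definition cover_mon (C : seq nat) : mon := fun v => nat_of_bool (v \in C).

(* G(J(P_m)) : monomial g is a minimal generator of the cover ideal *)
Definition in_GJ (m : nat) (g : mon) : Prop :=
  exists C, is_min_vcover_path m C /\ mon_eq g (cover_mon C).

Definition in_J2 (m : nat) (M : mon) : Prop :=
  exists u w, in_GJ m u /\ in_GJ m w /\ mon_dvd (mon_mul u w) M.

Definition mingen_J2 (m : nat) (M : mon) : Prop :=
  in_J2 m M /\ forall N, in_J2 m N -> mon_dvd N M -> mon_eq N M.

(* The rooted list R(P_m); each entry is the list of indices of the variables
   whose product is the monomial. *)
Fixpoint rooted (m : nat) : seq (seq nat) :=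
  match m with
  | 0 | 1 => [::]
  | 2 => [:: [:: 1]; [:: 2]]
  | 3 => [:: [:: 2]; [:: 1; 3]]
  | 4 => [:: [:: 1; 3]; [:: 2; 3]; [:: 2; 4]]
  | S (S ((S p) as q)) =>
      [seq m.-1 :: u | u <- rooted q] ++ [seq m :: m.-2 :: w | w <- rooted p]
  end.

(* Expressions: exponent vectors (a_1..a_q) (a seq of length q = size R) with
   sum 2; the monomial u_1^{a_1} ... u_q^{a_q}. *)
Definition expr_mon (R : seq (seq nat)) (a : seq nat) : mon :=
  fun v => \sum_(l < size R) nth 0 a l * mon_of (nth [::] R l) v.

Definition is_expr (R : seq (seq nat)) (a : seq nat) (M : mon) : Prop :=
  size a = size R /\ sumn a = 2 /\ mon_eq (expr_mon R a) M.

Definition lex_gt (a b : seq nat) : Prop :=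
  exists t, (forall s, s < t -> nth 0 a s = nth 0 b s) /\ nth 0 b t < nth 0 a t.

Definition is_max_expr (R : seq (seq nat)) (a : seq nat) (M : mon) : Prop :=
  is_expr R a M /\ forall b, is_expr R b M -> ~ lex_gt b a.

(* exponent vector e_i + e_j of length q (0-based indices) *)
Definition e2 (q i j : nat) : seq nat :=
  mkseq (fun l => nat_of_bool (l == i) + nat_of_bool (l == j)) q.

From mathcomp Require Import all_boot zify.
From Stdlib Require Import Classical.
Set Implicit Arguments. Unset Strict Implicit. Unset Printing Implicit Defensive.

(* A squarefree monomial is identified with its support, a set of vertices of
   P_n.  R(P_n) lists each minimal vertex cover once, u_a before u_c exactly
   when u_c contains the largest vertex at which the two differ.  If u_l
   divides x_v u_i for some l < i, comparing u_l and u_i at that vertex shows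
   that x_(v+1) and x_(v+2) lie in u_i.  Exchanging the parts of u_i and u_j
   on the vertices up to v when x_(v+1) lies in u_j, and up to v+1 otherwise,
   yields two vertex covers with product u_i u_j.  In the first case x_(v+1)
   can then be dropped from one of them, so u_i u_j is not a minimal
   generator.  In the second case, if u_i u_j is a minimal generator, the two
   new covers are minimal and the one replacing u_i precedes it in R(P_n),
   which gives a lexicographically larger expression of u_i u_j. *)

Definition in_seq (u : seq nat) : nat -> bool := fun k => k \in u.

Lemma mon_of_uniq u : uniq u -> mon_of u =1 in_seq u.
Proof. by move=> uu k; rewrite /mon_of count_uniq_mem. Qed.

Definition in_range n (P : nat -> bool) := forall k, P k -> 1 <= k <= n.
Definition covers n (P : nat -> bool) := forall k, 1 <= k -> k < n -> P k || P k.+1.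
(* A vertex cover of a path is minimal iff each of its vertices has a neighbour
   outside it. *)
Definition irredundant n (P : nat -> bool) :=
  forall k, P k -> ((1 < k) && ~~ P k.-1) || ((k < n) && ~~ P k.+1).
Definition min_cover n P := [/\ in_range n P, covers n P & irredundant n P].

Lemma in_range_out n P k : in_range n P -> n < k -> P k = false.
Proof. by move=> rP nk; apply/negP => /rP; lia. Qed.

Lemma eq_min_cover n P Q : P =1 Q -> min_cover n Q -> min_cover n P.
Proof.
move=> ePQ [rQ cQ iQ]; split.
- by move=> k; rewrite ePQ => /rQ.
- by move=> k k1 kn; rewrite !ePQ; apply: cQ.
- by move=> k; rewrite !ePQ => /iQ.
Qed.

Definition coversb n (P : nat -> bool) := all (fun k => P k || P k.+1) (iota 1 n.-1).
Definition irredundantb n (P : nat -> bool) :=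
  all (fun k => P k ==> ((1 < k) && ~~ P k.-1) || ((k < n) && ~~ P k.+1)) (iota 1 n).

Lemma coversP n P : reflect (covers n P) (coversb n P).
Proof.
apply: (iffP allP) => [cP k k1 kn | cP k]; last by rewrite mem_iota => kn; apply: cP; lia.
by apply: cP; rewrite mem_iota; lia.
Qed.

Lemma irredundantP n P : in_range n P -> reflect (irredundant n P) (irredundantb n P).
Proof.
move=> rP; apply: (iffP allP) => [iP k Pk | iP k _]; last exact/implyP/iP.
by apply: (implyP (iP k _)) => //; rewrite mem_iota; have := rP k Pk; lia.
Qed.

Lemma min_cover_in_GJ n P : min_cover n P -> in_GJ n (fun k => nat_of_bool (P k)).
Proof.
move=> [rP cP iP].
have memC k : (k \in filter P (iota 1 n)) = P k.
  rewrite mem_filter mem_iota; case Pk: (P k) => //=; have := rP k Pk; lia.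
exists (filter P (iota 1 n)); split; last by move=> k; rewrite /cover_mon memC.
split; first split.
- by move=> k; rewrite memC => /rP.
- by move=> k k1 kn; rewrite !memC; apply: cP.
move=> D subD [_ cD] c; rewrite memC => Pc.
have notD k : ~~ P k -> k \notin D by move=> nPk; apply: contra nPk => /subD; rewrite memC.
have rc := rP c Pc.
case/orP: (iP c Pc) => /andP [c1 /notD/negbTE nDc].
  by have := cD c.-1; rewrite prednK ?nDc /=; [apply; lia | lia].
by have := cD c ltac:(lia) c1; rewrite nDc orbF.
Qed.

Lemma exists_min_subcover n X : in_range n X -> covers n X ->
  exists2 X0, min_cover n X0 & forall k, X0 k -> X k.
Proof.
have [N] := ubnP (count X (iota 1 n)); elim: N X => // N IH X cntX rX cX.
have [iX|] := boolP (irredundantb n X).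
  by exists X => //; split => //; apply/irredundantP.
case/allPn => c; rewrite mem_iota negb_imply negb_or !negb_and !negbK => rc.
case/and3P => Xc lo hi.
pose X' k := X k && (k != c).
have lt_cnt : count X' (iota 1 n) < count X (iota 1 n).
  have -> : count X' (iota 1 n) = count (predC (pred1 c)) (filter X (iota 1 n)).
    by rewrite count_filter; apply: eq_count => k; rewrite /X' /= andbC.
  rewrite -[count X _]size_filter -(count_predC (pred1 c) (filter X _)).
  rewrite -[X in X < _]add0n ltn_add2r.
  by rewrite -has_count has_pred1 mem_filter Xc mem_iota.
have [X0 minX0 subX0] : exists2 X0, min_cover n X0 & forall k, X0 k -> X' k.
  apply: IH => [|k /andP [/rX] //|k k1 kn]; first lia.
  rewrite /X'; case: (eqVneq k c) => [kc|nkc]; last case: (eqVneq k.+1 c) => [k1c|nk1c].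
  - by subst k; move: hi; rewrite kn /= => ->; apply/orP; right; lia.
  - by move: lo; rewrite -k1c ltnS k1 /= => ->; apply/orP; left; lia.
  - by rewrite !andbT; apply: cX.
by exists X0 => // k /subX0 /andP [].
Qed.

Lemma leq_bool (b1 b2 : bool) : (b1 -> b2) -> b1 <= b2.
Proof. by case: b1 => // ->. Qed.

Lemma mingen_J2_covers n M X Y :
  mingen_J2 n M -> in_range n X -> covers n X -> in_range n Y -> covers n Y ->
  (forall k, X k + Y k <= M k) ->
  [/\ min_cover n X, min_cover n Y & forall k, X k + Y k = M k].
Proof.
move=> [_ minM] rX cX rY cY leM.
have [X0 minX0 subX] := exists_min_subcover rX cX.
have [Y0 minY0 subY] := exists_min_subcover rY cY.
have le0 k : X0 k <= X k /\ Y0 k <= Y k by split; apply: leq_bool; [apply: subX | apply: subY].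
have eqM : forall k, X0 k + Y0 k = M k.
  apply: minM => [|k]; last by have [? ?] := le0 k; have := leM k; lia.
  by exists (fun k => nat_of_bool (X0 k)), (fun k => nat_of_bool (Y0 k));
    split; [|split] => //; apply: min_cover_in_GJ.
have eq0 k : X k = X0 k /\ Y k = Y0 k.
  have [lX lY] := le0 k; have := leM k; rewrite -eqM.
  by case: (X0 k) (X k) (Y0 k) (Y k) lX lY => [] [] [] [].
have eX : X =1 X0 by move=> k; have [] := eq0 k.
have eY : Y =1 Y0 by move=> k; have [] := eq0 k.
by split=> [||k]; [exact: eq_min_cover eX minX0 | exact: eq_min_cover eY minY0 | rewrite eX eY].
Qed.

Definition revlex_lt n (P Q : nat -> bool) :=
  exists k, [/\ k <= n, ~~ P k, Q k & forall m, k < m <= n -> P m = Q m].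

Lemma eq_revlex_lt n P Q P' Q' : P' =1 P -> Q' =1 Q -> revlex_lt n P Q -> revlex_lt n P' Q'.
Proof.
move=> eP eQ [k [kn nPk Qk above]]; exists k; rewrite eP eQ; split => // m mk.
by rewrite eP eQ; apply: above.
Qed.

Lemma revlex_lt_asym n P Q : revlex_lt n P Q -> ~ revlex_lt n Q P.
Proof.
move=> [k1 [k1n nPk1 Qk1 above1]] [k2 [k2n nQk2 Pk2 above2]].
case: (ltngtP k1 k2) => [lt12|lt21|eq12].
- by move: nQk2; rewrite -(above1 k2) ?Pk2 // lt12.
- by move: nPk1; rewrite -(above2 k1) ?Qk1 // lt21.
- by move: nPk1; rewrite eq12 Pk2.
Qed.

Definition revlexb n (P Q : nat -> bool) :=
  has (fun k => [&& ~~ P k, Q k & all (fun m => P m == Q m) (iota k.+1 (n - k))])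
      (iota 0 n.+1).

Lemma revlexP n P Q : reflect (revlex_lt n P Q) (revlexb n P Q).
Proof.
apply: (iffP hasP) => [[k] | [k [kn nPk Qk above]]].
  rewrite mem_iota => kn /and3P [nPk Qk /allP above].
  by exists k; split=> [|//|//|m km]; [lia | apply/eqP/above; rewrite mem_iota; lia].
exists k; first by rewrite mem_iota; lia.
by rewrite nPk Qk; apply/allP => m; rewrite mem_iota => km; apply/eqP/above; lia.
Qed.

Definition ext_penult p (P : nat -> bool) := fun k : nat => (k == p.+2) || P k.
Definition ext_last p (P : nat -> bool) := fun k : nat => [|| k == p.+3, k == p.+1 | P k].
Definition restrict m (P : nat -> bool) := fun k : nat => P k && (k <= m).

Lemma min_cover_ext_penult p P : min_cover p.+1 P -> min_cover p.+3 (ext_penult p P).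
Proof.
case=> rP cP iP; rewrite /ext_penult; split.
- by move=> k /orP [/eqP -> | /rP]; lia.
- move=> k k1 kn; case: (ltnP k p.+1) => kp.
    by case/orP: (cP k k1 kp) => ->; rewrite !orbT.
  have [->|->] : k = p.+1 \/ k = p.+2 by lia.
    by rewrite eqxx orbT.
  by rewrite eqxx.
- move=> k /orP [/eqP -> | Pk].
    by rewrite /= (in_range_out (k:=p.+3) rP) //; lia.
  have := rP k Pk; case/orP: (iP k Pk) => /andP [k1 nP] rk.
    by rewrite k1 (negbTE nP) orbF /=; lia.
  by rewrite (negbTE nP) !orbF /=; lia.
Qed.

Lemma min_cover_ext_last p P : min_cover p P -> min_cover p.+3 (ext_last p P).
Proof.
case=> rP cP iP; rewrite /ext_last; split.
- by move=> k /or3P [/eqP -> | /eqP -> | /rP]; lia.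
- move=> k k1 kn; case: (ltnP k p) => kp.
    by case/orP: (cP k k1 kp) => ->; rewrite !orbT.
  have [->|[->|->]] : k = p \/ k = p.+1 \/ k = p.+2 by lia.
  1-3: by rewrite eqxx !orbT.
- move=> k /or3P [/eqP -> | /eqP -> | Pk].
  + by rewrite /= (in_range_out (k:=p.+2) rP) //; lia.
  + by rewrite /= (in_range_out (k:=p.+2) rP) //; lia.
  have := rP k Pk; case/orP: (iP k Pk) => /andP [k1 nP] rk.
    by rewrite k1 (negbTE nP) !orbF /=; lia.
  by rewrite (negbTE nP) !orbF /=; lia.
Qed.

Lemma min_cover_restrict n m P : min_cover n P -> m < n -> P m.+1 ->
  min_cover m (restrict m P).
Proof.
case=> rP cP iP mn Pm1; rewrite /restrict; split.
- by move=> k /andP [/rP]; lia.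
- by move=> k k1 km; rewrite km (ltnW km) !andbT; apply: cP; lia.
move=> k /andP [Pk km]; case/orP: (iP k Pk) => /andP [k1 nP].
  by rewrite k1 (negbTE nP).
case: (ltnP k m) => [lt_km|le_mk]; first by rewrite (negbTE nP) /=; lia.
have eq_km : k = m by lia.
by move: nP; rewrite eq_km Pm1.
Qed.

Lemma min_cover_penult_inv p P : min_cover p.+3 P -> P p.+2 ->
  min_cover p.+1 (restrict p.+1 P) /\ P =1 ext_penult p (restrict p.+1 P).
Proof.
move=> mcP Pp2; split; first exact: min_cover_restrict mcP _ Pp2.
case: mcP => rP _ iP.
have nPp3 : P p.+3 = false by apply/negbTE/negP => /iP; rewrite /= Pp2 ltnn.
move=> k; rewrite /ext_penult /restrict.
case: (ltngtP k p.+2) => [lt_k|gt_k|->]; last by rewrite Pp2.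
  by rewrite -ltnS lt_k andbT.
rewrite leqNgt (ltnW gt_k) andbF orbF.
by case: (eqVneq k p.+3) => [->//|ne_k]; apply: in_range_out rP _; lia.
Qed.

Lemma min_cover_last_inv p P : min_cover p.+3 P -> ~~ P p.+2 ->
  min_cover p (restrict p P) /\ P =1 ext_last p (restrict p P).
Proof.
move=> mcP nPp2; have [rP cP _] := mcP.
have Pp1 : P p.+1.
  by have := cP p.+1 (ltn0Sn _) (ltnW (ltnSn _)); rewrite (negbTE nPp2) orbF.
have Pp3 : P p.+3 by have := cP p.+2 (ltn0Sn _) (ltnSn _); rewrite (negbTE nPp2).
split; first by apply: min_cover_restrict mcP _ Pp1; lia.
move=> k; rewrite /ext_last /restrict.
have [le_k|gt_k] := leqP k p.
  by rewrite andbT; case: (P k); rewrite ?orbT //=; lia.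
rewrite andbF orbF.
case: (eqVneq k p.+1) => [->|ne1]; first by rewrite Pp1 orbT.
case: (eqVneq k p.+3) => [->//|ne3] /=.
case: (eqVneq k p.+2) => [->|ne2]; first exact: negbTE.
by apply: in_range_out rP _; lia.
Qed.

Lemma revlex_lt_ext_penult p P Q : in_range p.+1 P -> in_range p.+1 Q ->
  revlex_lt p.+1 P Q -> revlex_lt p.+3 (ext_penult p P) (ext_penult p Q).
Proof.
move=> rP rQ [k [kp nPk Qk above]]; exists k; rewrite /ext_penult Qk orbT.
split => //; first lia.
  by rewrite (negbTE nPk) orbF; apply/eqP; lia.
move=> m /andP [km mp]; case: (eqVneq m p.+2) => //= _.
have [le_m|gt_m] := leqP m p.+1; first by apply: above; rewrite km.
by rewrite !(in_range_out _ gt_m).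
Qed.

Lemma revlex_lt_ext_last p P Q : in_range p P -> in_range p Q ->
  revlex_lt p P Q -> revlex_lt p.+3 (ext_last p P) (ext_last p Q).
Proof.
move=> rP rQ [k [kp nPk Qk above]]; exists k; rewrite /ext_last Qk !orbT.
split => //; first lia.
  by rewrite (negbTE nPk) orbF; apply/norP; split; apply/eqP; lia.
move=> m /andP [km mp]; case: (eqVneq m p.+3) => //= _; case: (eqVneq m p.+1) => //= _.
have [le_m|gt_m] := leqP m p; first by apply: above; rewrite km.
by rewrite !(in_range_out _ gt_m).
Qed.

Lemma revlex_lt_penult_last p P Q : in_range p.+1 P ->
  revlex_lt p.+3 (ext_penult p P) (ext_last p Q).
Proof.
move=> rP; exists p.+3; rewrite /ext_penult /ext_last eqxx (in_range_out rP) //.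
by split=> [||//|m]; lia.
Qed.

Lemma rootedE p : 2 <= p -> rooted p.+3 =
  [seq p.+2 :: u | u <- rooted p.+1] ++ [seq p.+3 :: p.+1 :: w | w <- rooted p].
Proof. by case: p => [|[|p]]. Qed.

Lemma in_seq_penult p u : in_seq (p.+2 :: u) =1 ext_penult p (in_seq u).
Proof. by move=> k; rewrite /in_seq /ext_penult in_cons. Qed.

Lemma in_seq_last p u : in_seq (p.+3 :: p.+1 :: u) =1 ext_last p (in_seq u).
Proof. by move=> k; rewrite /in_seq /ext_last !in_cons. Qed.

Fixpoint bitseqs n : seq bitseq :=
  if n is n'.+1 then [seq true :: s | s <- bitseqs n'] ++ [seq false :: s | s <- bitseqs n']
  else [:: [::]].

Lemma mem_bitseqs n bs : size bs = n -> bs \in bitseqs n.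
Proof.
elim: n bs => [|n IH] [|b bs] //= [/IH bs_n].
by rewrite mem_cat; case: b; rewrite map_f ?orbT.
Qed.

Lemma rooted_min_cover m u : u \in rooted m -> uniq u /\ min_cover m (in_seq u).
Proof.
elim/ltn_ind: m u => m IH u.
have [le_m4|lt4m] := leqP m 4.
  have : all (fun u => [&& uniq u, all (fun k => 1 <= k <= m) u,
                           coversb m (in_seq u) & irredundantb m (in_seq u)]) (rooted m).
    by case: m le_m4 {IH} => [|[|[|[|[|]]]]].
  move=> /allP chk /chk /and4P [uu /allP ru cu iu].
  have rP : in_range m (in_seq u) by move=> k /ru.
  by do 2!split => //; [apply/coversP | apply/irredundantP].
case: m IH lt4m => [|[|[|p]]] // IH lt4m.
rewrite rootedE ?mem_cat; last lia.
move=> /orP [] /mapP [w w_in ->].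
- have [uw mcw] := IH p.+1 ltac:(lia) w w_in; have [rw _ _] := mcw.
  split; last exact: eq_min_cover (in_seq_penult p w) (min_cover_ext_penult mcw).
  by rewrite /= uw andbT; apply/negP => /rw; lia.
- have [uw mcw] := IH p ltac:(lia) w w_in; have [rw _ _] := mcw.
  split; last exact: eq_min_cover (in_seq_last p w) (min_cover_ext_last mcw).
  have out k : p < k -> k \notin w by move=> pk; apply/negP => /rw; lia.
  by rewrite /= uw in_cons negb_or !out ?andbT; lia.
Qed.

Lemma rooted_uniq m a : a < size (rooted m) -> uniq (nth [::] (rooted m) a).
Proof. by move=> a_m; have [] := rooted_min_cover (mem_nth [::] a_m). Qed.

Lemma rooted_in_range m a : a < size (rooted m) -> in_range m (in_seq (nth [::] (rooted m) a)).
Proof. by move=> a_m; have [_ []] := rooted_min_cover (mem_nth [::] a_m). Qed.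

Lemma rooted_sorted m a c : a < c -> c < size (rooted m) ->
  revlex_lt m (in_seq (nth [::] (rooted m) a)) (in_seq (nth [::] (rooted m) c)).
Proof.
elim/ltn_ind: m a c => m IH a c ac c_m.
have [le_m4|lt4m] := leqP m 4.
  have : all (fun c => all (fun a => revlexb m (in_seq (nth [::] (rooted m) a))
                                               (in_seq (nth [::] (rooted m) c)))
                           (iota 0 c)) (iota 0 (size (rooted m))).
    by case: m le_m4 {IH c_m} => [|[|[|[|[|]]]]].
  move=> /allP /(_ c); rewrite mem_iota c_m => /(_ isT) /allP /(_ a).
  by rewrite mem_iota ac => /(_ isT) /revlexP.
case: m IH lt4m c_m => [|[|[|p]]] // IH lt4m.
rewrite rootedE ?size_cat ?size_map; last lia.
set s1 := size (rooted p.+1) => c_m.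
rewrite !nth_cat !size_map -/s1.
have [c_s1|s1_c] := ltnP c s1.
  have a_s1 := ltn_trans ac c_s1.
  rewrite a_s1 !(nth_map [::]) //.
  apply: eq_revlex_lt (in_seq_penult _ _) (in_seq_penult _ _) _.
  apply: revlex_lt_ext_penult (rooted_in_range a_s1) (rooted_in_range c_s1) _.
  exact: IH (leqnSn _) _ _ ac c_s1.
have [a_s1|s1_a] := ltnP a s1.
  rewrite !(nth_map [::]) //; last lia.
  apply: eq_revlex_lt (in_seq_penult _ _) (in_seq_last _ _) _.
  exact/revlex_lt_penult_last/rooted_in_range.
have a_s : a - s1 < size (rooted p) by lia.
have c_s : c - s1 < size (rooted p) by lia.
rewrite !(nth_map [::]) //.
apply: eq_revlex_lt (in_seq_last _ _) (in_seq_last _ _) _.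
apply: revlex_lt_ext_last (rooted_in_range a_s) (rooted_in_range c_s) _.
by apply: IH; lia.
Qed.

Lemma rooted_complete m P : 2 <= m -> min_cover m P ->
  exists2 a, a < size (rooted m) & in_seq (nth [::] (rooted m) a) =1 P.
Proof.
elim/ltn_ind: m P => m IH P m2 mcP.
have [le_m4|lt4m] := leqP m 4.
  pose u := filter P (iota 1 m).
  have eu : in_seq u =1 P.
    move=> k; rewrite /in_seq mem_filter mem_iota andb_idr // => Pk.
    by have [rP _ _] := mcP; have := rP k Pk; lia.
  have [ru /coversP cu iu] : min_cover m (in_seq u) := eq_min_cover eu mcP.
  move/(irredundantP ru): iu => iu.
  have : all (fun bs => let u := mask bs (iota 1 m) in
      (coversb m (in_seq u) && irredundantb m (in_seq u)) ==> (u \in rooted m)) (bitseqs m).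
    by case: m le_m4 m2 {IH mcP u eu ru cu iu} => [|[|[|[|[|]]]]].
  have bs_in : map P (iota 1 m) \in bitseqs m by rewrite mem_bitseqs ?size_map ?size_iota.
  move=> /allP /(_ _ bs_in); rewrite -filter_mask -/u /= cu iu => u_in.
  by exists (index u (rooted m)); rewrite ?index_mem ?nth_index.
case: m IH lt4m m2 mcP => [|[|[|p]]] // IH lt4m _ mcP.
rewrite rootedE ?size_cat ?size_map; last lia.
have [Pp2|nPp2] := boolP (P p.+2).
  have [mcQ eP] := min_cover_penult_inv mcP Pp2.
  have [a a_s ea] := IH p.+1 ltac:(lia) _ ltac:(lia) mcQ.
  exists a; first lia.
  rewrite nth_cat size_map a_s (nth_map [::]) // => k.
  by rewrite in_seq_penult eP /ext_penult ea.
have [mcQ eP] := min_cover_last_inv mcP nPp2.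
have [a a_s ea] := IH p ltac:(lia) _ ltac:(lia) mcQ.
exists (size (rooted p.+1) + a); first lia.
rewrite nth_cat size_map ltnNge leq_addr /= addKn (nth_map [::]) // => k.
by rewrite in_seq_last eP /ext_last ea.
Qed.

Lemma nth_e2 q a c s : s < q -> nth 0 (e2 q a c) s = (s == a) + (s == c).
Proof. by move=> s_q; rewrite nth_mkseq. Qed.

Lemma sum_ord_pick q a (g : nat -> nat) : a < q -> \sum_(l < q) (l == a :> nat) * g l = g a.
Proof.
move=> a_q; rewrite (eq_bigr (fun l : 'I_q => if l == a :> nat then g l else 0)).
  by rewrite -big_mkcond big_ord1_eq a_q.
by move=> l _; case: eqP; rewrite ?mul1n.
Qed.

Lemma sumn_e2 q a c : a < q -> c < q -> sumn (e2 q a c) = 2.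
Proof.
move=> a_q c_q.
have sumn_pair s : sumn [seq (l == a) + (l == c) | l <- s] = count_mem a s + count_mem c s.
  by elim: s => //= x s ->; lia.
by rewrite sumn_pair !count_uniq_mem ?iota_uniq // !mem_iota a_q c_q.
Qed.

Lemma is_expr_e2 (R : seq (seq nat)) a c M : a < size R -> c < size R ->
  mon_eq (mon_mul (mon_of (nth [::] R a)) (mon_of (nth [::] R c))) M ->
  is_expr R (e2 (size R) a c) M.
Proof.
move=> a_R c_R eM; split; first exact: size_mkseq.
split; first exact: sumn_e2.
move=> v; rewrite /expr_mon -eM.
rewrite (eq_bigr (fun l : 'I_(size R) => (l == a :> nat) * mon_of (nth [::] R l) v
                                        + (l == c :> nat) * mon_of (nth [::] R l) v)).
  by rewrite big_split /= !(sum_ord_pick (fun l => mon_of (nth [::] R l) v)).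
by move=> l _; rewrite nth_e2 // mulnDl.
Qed.

Lemma lex_gt_e2 q a c i j : a < i < j -> a < q -> lex_gt (e2 q a c) (e2 q i j).
Proof.
move=> /andP [ai ij] a_q; exists (minn a c); split.
  by move=> s s_ac; rewrite !nth_e2; lia.
by rewrite !nth_e2; lia.
Qed.

Lemma not_max_expr_revlex n i j M X Y : 2 <= n -> i < j -> j < size (rooted n) ->
  min_cover n X -> min_cover n Y -> (forall k, X k + Y k = M k) ->
  revlex_lt n X (in_seq (nth [::] (rooted n) i)) ->
  ~ is_max_expr (rooted n) (e2 (size (rooted n)) i j) M.
Proof.
move=> n2 ij j_R mcX mcY eM ltXi [_ maxM].
have [a a_R ea] := rooted_complete n2 mcX.
have [c c_R ec] := rooted_complete n2 mcY.
have ai : a < i.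
  rewrite ltnNge; apply/negP => ia; apply: (revlex_lt_asym ltXi).
  have [lt_ia|eq_ia] := ltnP i a; last first.
    have eia : i = a by apply/eqP; rewrite eqn_leq ia eq_ia.
    by move: ltXi; rewrite eia; apply: eq_revlex_lt ea (fun k => esym (ea k)).
  exact: eq_revlex_lt (frefl _) (fun k => esym (ea k)) (rooted_sorted lt_ia a_R).
apply: (maxM _ (is_expr_e2 a_R c_R _)); last by apply: lex_gt_e2; lia.
by move=> k; rewrite /mon_mul !mon_of_uniq ?rooted_uniq // ea ec eM.
Qed.

Lemma in_colon_var (R : seq (seq nat)) i v : i < size R ->
  in_colon [seq mon_of u | u <- take i R] (mon_of (nth [::] R i)) (var v) ->
  exists2 l, l < i & forall k, k \in nth [::] R l -> (k == v) || (k \in nth [::] R i).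
Proof.
move=> i_R; have take_i := size_takel (ltnW i_R).
case=> l; rewrite size_map take_i => li.
rewrite (nth_map [::]) ?take_i // nth_take // => dvd_l.
exists l => // k; move: (dvd_l k); rewrite /mon_mul /var /mon_of.
have pos u : (0 < count_mem k u) = (k \in u) by rewrite -has_count has_pred1.
rewrite -!pos; case: (k == v) => /=; lia.
Qed.

Lemma revlex_lt_predU1 n U L v : min_cover n U -> covers n L ->
  (forall k, L k -> (k == v) || U k) -> revlex_lt n L U ->
  [/\ v < n, U v.+1 & (v.+2 <= n -> U v.+2)].
Proof.
move=> [rU _ iU] cL subL [k [kn nLk Uk above]].
have rk := rU k Uk.
case/orP: (iU k Uk) => /andP [k1 nU]; last first.
  have := cL k ltac:(lia) k1.
  by rewrite (negbTE nLk) above ?(negbTE nU) //; lia.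
have := cL k.-1 ltac:(lia) ltac:(lia); rewrite prednK; last lia.
rewrite (negbTE nLk) orbF => /subL; rewrite (negbTE nU) orbF => /eqP ek.
have kv : k = v.+1 by lia.
subst k; split => // v2n.
by have := cL v.+1 isT v2n; rewrite (negbTE nLk) /= above //; lia.
Qed.

Definition swap_below e (P Q : nat -> bool) := fun k : nat => if k <= e then P k else Q k.

Lemma in_range_swap n e P Q : in_range n P -> in_range n Q -> in_range n (swap_below e P Q).
Proof. by move=> rP rQ k; rewrite /swap_below; case: ifP => _; [apply: rP | apply: rQ]. Qed.

Lemma swap_belowD e P Q k : swap_below e P Q k + swap_below e Q P k = P k + Q k.
Proof. by rewrite /swap_below; case: ifP => // _; rewrite addnC. Qed.

Lemma covers_swap n e P Q : covers n P -> covers n Q -> (e < n -> Q e.+1) ->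
  covers n (swap_below e P Q).
Proof.
move=> cP cQ Qe1 k k1 kn; rewrite /swap_below.
case: (ltngtP k e) => [lt_ke|gt_ke|ek].
- exact: cP.
- exact: cQ.
- by rewrite ek Qe1 ?orbT // -ek.
Qed.

Lemma not_mingen_J2_shared_succ n M U W v :
  min_cover n U -> min_cover n W -> (forall k, M k = U k + W k) ->
  W v -> U v.+1 -> W v.+1 -> (v.+2 <= n -> U v.+2) -> ~ mingen_J2 n M.
Proof.
move=> [rU cU _] [rW cW _] eM Wv Uv1 Wv1 Uv2 minM.
pose S := swap_below v W U.
pose X k := S k && (k != v.+1).
have eX k : k != v.+1 -> X k = S k by rewrite /X => ->; rewrite andbT.
have rX : in_range n X by move=> k /andP [/(in_range_swap rW rU)].
have cX : covers n X.
  move=> k k1 kn.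
  case: (eqVneq k v) => [->|nkv]; first by rewrite eX /S /swap_below ?leqnn ?Wv //; lia.
  case: (eqVneq k v.+1) => [ekv|nkv1]; last first.
    by rewrite !eX //; apply: (covers_swap cW cU (fun _ => Uv1)).
  by subst k; rewrite (eX v.+2) /S /swap_below ?ifN ?Uv2 ?orbT //; lia.
pose Y := swap_below v U W.
have leM k : X k + Y k <= M k.
  by rewrite eM [U k + _]addnC -(swap_belowD v W U) leq_add2r; apply: leq_bool => /andP [].
have [_ _ eqM] := mingen_J2_covers minM rX cX (in_range_swap rU rW)
                    (covers_swap cU cW (fun _ => Wv1)) leM.
by move: (eqM v.+1); rewrite eM /X eqxx andbF /Y /swap_below ltnn Uv1 Wv1.
Qed.

Lemma mingen_J2_swap n M U W e :
  mingen_J2 n M -> min_cover n U -> min_cover n W -> (forall k, M k = U k + W k) ->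
  U e -> ~~ W e -> e <= n -> (e < n -> U e.+1) -> (e < n -> W e.+1) ->
  exists X Y, [/\ min_cover n X, min_cover n Y, (forall k, X k + Y k = M k)
                & revlex_lt n X U].
Proof.
move=> minM [rU cU _] [rW cW _] eM Ue nWe en Ue1 We1.
have leM k : swap_below e W U k + swap_below e U W k <= M k.
  by rewrite swap_belowD eM addnC.
have [mcX mcY eXY] := mingen_J2_covers minM (in_range_swap rW rU)
  (covers_swap cW cU Ue1) (in_range_swap rU rW) (covers_swap cU cW We1) leM.
exists (swap_below e W U), (swap_below e U W); split => //.
exists e; rewrite /swap_below leqnn; split => // m /andP [em _].
by rewrite leqNgt em.
Qed.

Theorem proposition4p2 (n i j : nat) :
  2 <= n ->
  0 < i -> i < j -> j < size (rooted n) ->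
  (exists v, [/\ 1 <= v <= n,
     mon_dvd (var v) (mon_of (nth [::] (rooted n) j)) &
     in_colon [seq mon_of u | u <- take i (rooted n)]
              (mon_of (nth [::] (rooted n) i)) (var v)]) ->
  ~ mingen_J2 n (mon_mul (mon_of (nth [::] (rooted n) i))
                        (mon_of (nth [::] (rooted n) j)))
  \/ ~ is_max_expr (rooted n) (e2 (size (rooted n)) i j)
         (mon_mul (mon_of (nth [::] (rooted n) i))
                  (mon_of (nth [::] (rooted n) j))).
Proof.
move=> n2 _ ij j_R [v [_ dvd_vj /(in_colon_var (ltn_trans ij j_R)) [l li sub_l]]].
have i_R := ltn_trans ij j_R; have l_R := ltn_trans li i_R.
have [_ mcU] := rooted_min_cover (mem_nth [::] i_R).
have [_ mcW] := rooted_min_cover (mem_nth [::] j_R); have [_ cW _] := mcW.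
have [_ [_ cL _]] := rooted_min_cover (mem_nth [::] l_R).
set M := mon_mul _ _; set U := in_seq (nth [::] (rooted n) i).
set W := in_seq (nth [::] (rooted n) j).
have eM k : M k = U k + W k by rewrite /M /mon_mul !mon_of_uniq ?rooted_uniq.
have Wv : W v by have := dvd_vj v; rewrite /var eqxx mon_of_uniq ?rooted_uniq ?lt0b.
have [vn Uv1 Uv2] := revlex_lt_predU1 mcU cL sub_l (rooted_sorted li i_R).
have [Wv1|nWv1] := boolP (W v.+1).
  by left; apply: not_mingen_J2_shared_succ mcU mcW eM Wv Uv1 Wv1 Uv2.
have [minM|] := classic (mingen_J2 n M); last by left.
have Wv2 : v.+1 < n -> W v.+2.
  by move=> v2n; have := cW v.+1 isT v2n; rewrite -/W (negbTE nWv1).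
have [X [Y [mcX mcY eXY ltXU]]] := mingen_J2_swap minM mcU mcW eM Uv1 nWv1 vn Uv2 Wv2.
by right; apply: not_max_expr_revlex n2 ij j_R mcX mcY eXY ltXU.
Qed.
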